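(* Let $S$ be a $\Sigma_1$-sequent, $H$ a Herbrand structure of $S$, $D=(U_1,\dots,U_q)\circ W$ a decomposition of $H$ with $W=\{\bar w_1,\dots,\bar w_k\}$, and $S^\sim$ the schematic extended Herbrand sequent of $S$ w.r.t. $D$. Let $A$ be a formula in conjunctive normal form such that $[X\backslash\lambda\bar\alpha.A]$ is a solution of $S^\sim$. Then the procedure $\mathrm{SF}$ described below terminates on input $A$, and for every $B\in\mathrm{SF}(A)$, $[X\backslash\lambda\bar\alpha.B]$ is a solution of $S^\sim$. Procedure $\mathrm{SF}(A)$: (i) replace $A$ by the CNF obtained from $A$ by deleting all clauses containing none of the variables $\alpha_1,\dots,\alpha_n$; (ii) set $R:=\{A\}$; (iii) for each $B\in\mathrm{forget}(A)$: if the sequent $B[\bar\alpha\backslash\bar w_1],\dots,B[\bar\alpha\backslash\bar w_k],\Gamma\vdash\Delta$ is E-valid, set $R:=R\cup\mathrm{SF}(B)$; (iv) return $R$.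
   Context: We work in first-order predicate logic with equality. A $\Sigma_1$-sequent is a sequent $S$ of the form $\forall\bar x_1 F_1,\dots,\forall\bar x_p F_p\vdash\exists\bar x_{p+1}F_{p+1},\dots,\exists\bar x_q F_q$, where each $F_i$ is quantifier-free and $\bar x_i$ is a block of $k_i\ge 0$ variables. A sequent is E-valid if it is valid in predicate logic with equality (a quantifier-free formula or sequent with free variables is called E-valid if its universal closure is); a quasi-tautology is a quantifier-free E-valid sequent. A Herbrand structure of $S$ is a tuple $H=(H_1,\dots,H_q)$, $H_i$ a finite set of $k_i$-vectors of ground terms, such that, with $\mathcal F_i=\{F_i[\bar x_i\backslash\bar t]:\bar t\in H_i\}$ if $k_i>0$ and $\mathcal F_i=\{F_i\}$ if $k_i=0$, the sequent $\mathcal F_1\cup\dots\cup\mathcal F_p\vdash\mathcal F_{p+1}\cup\dots\cup\mathcal F_q$ is a quasi-tautology. A decomposition of $H$ is a pair $D=(U_1,\dots,U_q)\circ W$ where, for fresh variables $\bar\alpha=(\alpha_1,\dots,\alpha_n)$, each $U_i$ is a finite set of $k_i$-vectors of terms possibly containing the $\alpha_j$, and $W=\{\bar w_1,\dots,\bar w_k\}$ is a finite set of $n$-vectors of ground terms not containing any $\alpha_j$, such that $H_i=\{u[\bar\alpha\backslash\bar w]:u\in U_i,\bar w\in W\}$ for every $i$ with $k_i>0$. Put $\mathcal F'_i=\{F_i[\bar x_i\backslash\bar t]:\bar t\in U_i\}$ if $k_i>0$ and $\mathcal F'_i=\{F_i\}$ if $k_i=0$, and let $\Gamma=\mathcal F'_1\cup\dots\cup\mathcal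 F'_p$, $\Delta=\mathcal F'_{p+1}\cup\dots\cup\mathcal F'_q$. For an $n$-place predicate variable $X$, the schematic extended Herbrand sequent of $S$ w.r.t. $D$ is $S^\sim:\ X\bar\alpha\to\bigwedge_{i=1}^k X\bar w_i,\ \Gamma\vdash\Delta$. For a quantifier-free formula $A$ whose free variables are among $\alpha_1,\dots,\alpha_n$, $[X\backslash\lambda\bar\alpha.A]$ is a solution of $S^\sim$ if $S^\sim[X\backslash\lambda\bar\alpha.A]$ is a quasi-tautology. Forgetful reasoning: a CNF is regarded as a finite set of clauses $\{C_i\}_{i\in I}$ (the $\alpha_j$ being treated as constants). For clauses $C_1,C_2$, $\mathrm{res}(C_1,C_2)$ is the set of propositional resolvents of $C_1,C_2$ and $\mathrm{para}(C_1,C_2)$ is the set of clauses obtainable from $C_1,C_2$ by one ground paramodulation step. For a formula $F$ with CNF $\{C_i\}_{i\in I}$, $$\mathrm{forget}(F)=\Big\{C\wedge\bigwedge_{i\in I\setminus\{j,m\}}C_i\ \Big|\ j,m\in I,\ C\in\mathrm{res}(C_j,C_m)\cup\mathrm{para}(C_j,C_m)\Big\}.$$ *)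

From Stdlib Require Import List Arith Bool.
Import ListNotations.

(* Terms: ordinary variables [Var x], the fresh variables [Alpha j]
   (alpha_{j+1} of the paper, j < n), and function applications
   (constants are 0-ary applications). *)
Inductive term : Type :=
| Var   : nat -> term
| Alpha : nat -> term
| Fn    : nat -> list term -> term.

Inductive formula : Type :=
| FTrue  : formula
| FFalse : formula
| FPred  : nat -> list term -> formula
| FEq    : term -> term -> formula
| FNot   : formula -> formula
| FAnd   : formula -> formula -> formula
| FOr    : formula -> formula -> formula
| FImp   : formula -> formula -> formula.

Fixpoint bigand (l : list formula) : formula :=
  match l with
  | [] => FTrue
  | [f] => f
  | f :: l' => FAnd f (bigand l')
  end.

Fixpoint bigor (l : list formula) : formula :=
  match l with
  | [] => FFalse
  | [f] => f
  | f :: l' => FOr f (bigor l')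
  end.

Section Sem.
Variables (D : Type) (fi : nat -> list D -> D) (pi : nat -> list D -> Prop)
          (ev : nat -> D) (ea : nat -> D).

Fixpoint eval (t : term) : D :=
  match t with
  | Var x => ev x
  | Alpha j => ea j
  | Fn f l => fi f (map eval l)
  end.

Fixpoint sat (F : formula) : Prop :=
  match F with
  | FTrue => True
  | FFalse => False
  | FPred p l => pi p (map eval l)
  | FEq s t => eval s = eval t
  | FNot G => ~ sat G
  | FAnd G K => sat G /\ sat K
  | FOr G K => sat G \/ sat K
  | FImp G K => sat G -> sat K
  end.
End Sem.

(* A quantifier-free sequent Gamma |- Delta is E-valid (its universal
   closure is valid in every structure, equality being identity); for
   quantifier-free sequents this is "quasi-tautology". *)
Definition E_valid (G Dl : list formula) : Prop :=
  forall (D : Type) (fi : nat -> list D -> D) (pi : nat -> list D -> Prop)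
         (ev : nat -> D) (ea : nat -> D),
    (forall F, In F G -> sat D fi pi ev ea F) ->
    exists F, In F Dl /\ sat D fi pi ev ea F.

Fixpoint ground (t : term) : Prop :=
  match t with
  | Var _ => False
  | Alpha _ => False
  | Fn _ l => (fix gl (l : list term) : Prop :=
                 match l with [] => True | a :: l' => ground a /\ gl l' end) l
  end.

Fixpoint alpha_term (n : nat) (t : term) : Prop :=
  match t with
  | Var _ => False
  | Alpha j => j < n
  | Fn _ l => (fix gl (l : list term) : Prop :=
                 match l with [] => True | a :: l' => alpha_term n a /\ gl l' end) l
  end.

Fixpoint alpha_formula (n : nat) (F : formula) : Prop :=
  match F with
  | FTrue | FFalse => True
  | FPred _ l => Forall (alpha_term n) l
  | FEq s t => alpha_term n s /\ alpha_term n t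
  | FNot G => alpha_formula n G
  | FAnd G K | FOr G K | FImp G K => alpha_formula n G /\ alpha_formula n K
  end.

Fixpoint alpha_bounded (n : nat) (t : term) : Prop :=
  match t with
  | Var _ => True
  | Alpha j => j < n
  | Fn _ l => (fix gl (l : list term) : Prop :=
                 match l with [] => True | a :: l' => alpha_bounded n a /\ gl l' end) l
  end.

Fixpoint lookup (xs : list nat) (ts : list term) (x : nat) : option term :=
  match xs, ts with
  | y :: xs', t :: ts' => if Nat.eqb x y then Some t else lookup xs' ts' x
  | _, _ => None
  end.

Fixpoint subst_t (xs : list nat) (ts : list term) (t : term) : term :=
  match t with
  | Var x => match lookup xs ts x with Some u => u | None => Var x end
  | Alpha j => Alpha j
  | Fn f l => Fn f (map (subst_t xs ts) l)
  end.

Fixpoint subst_f (xs : list nat) (ts : list term) (F : formula) : formula :=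
  match F with
  | FTrue => FTrue
  | FFalse => FFalse
  | FPred p l => FPred p (map (subst_t xs ts) l)
  | FEq s t => FEq (subst_t xs ts s) (subst_t xs ts t)
  | FNot G => FNot (subst_f xs ts G)
  | FAnd G K => FAnd (subst_f xs ts G) (subst_f xs ts K)
  | FOr G K => FOr (subst_f xs ts G) (subst_f xs ts K)
  | FImp G K => FImp (subst_f xs ts G) (subst_f xs ts K)
  end.

Fixpoint asubst_t (w : list term) (t : term) : term :=
  match t with
  | Var x => Var x
  | Alpha j => nth j w (Alpha j)
  | Fn f l => Fn f (map (asubst_t w) l)
  end.

Fixpoint asubst_f (w : list term) (F : formula) : formula :=
  match F with
  | FTrue => FTrue
  | FFalse => FFalse
  | FPred p l => FPred p (map (asubst_t w) l)
  | FEq s t => FEq (asubst_t w s) (asubst_t w t)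
  | FNot G => FNot (asubst_f w G)
  | FAnd G K => FAnd (asubst_f w G) (asubst_f w K)
  | FOr G K => FOr (asubst_f w G) (asubst_f w K)
  | FImp G K => FImp (asubst_f w G) (asubst_f w K)
  end.

(* A Sigma_1-sequent is given by p and a list of q blocks (xs_i, F_i):
   blocks 1..p are the antecedent formulas  forall xs_i F_i,
   blocks p+1..q the succedent formulas  exists xs_i F_i. *)
Definition block := (list nat * formula)%type.

Definition sigma1_sequent (p : nat) (bs : list block) : Prop :=
  p <= length bs /\ Forall (fun b => NoDup (fst b)) bs.

Definition inst_set (b : block) (T : list (list term)) : list formula :=
  match fst b with
  | [] => [snd b]
  | _ => map (fun t => subst_f (fst b) t (snd b)) T
  end.

Definition inst_all (bs : list block) (Ts : list (list (list term))) : list formula :=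
  flat_map (fun bT => inst_set (fst bT) (snd bT)) (combine bs Ts).

Definition dflt_block : block := ([], FTrue).

Definition herbrand_structure (p : nat) (bs : list block)
    (H : list (list (list term))) : Prop :=
  length H = length bs /\
  (forall i, i < length bs -> forall t, In t (nth i H []) ->
      length t = length (fst (nth i bs dflt_block)) /\ Forall ground t) /\
  E_valid (inst_all (firstn p bs) (firstn p H))
          (inst_all (skipn p bs) (skipn p H)).

Definition decomposition (bs : list block) (H : list (list (list term)))
    (n : nat) (U : list (list (list term))) (W : list (list term)) : Prop :=
  length U = length bs /\
  (forall i, i < length bs -> forall u, In u (nth i U []) ->
      length u = length (fst (nth i bs dflt_block)) /\ Forall (alpha_bounded n) u) /\
  (forall w, In w W -> length w = n /\ Forall ground w) /\
  (forall i, i < length bs -> 0 < length (fst (nth i bs dflt_block)) ->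
     forall t, In t (nth i H []) <->
       exists u w, In u (nth i U []) /\ In w W /\ t = map (asubst_t w) u).

Definition Gamma (p : nat) (bs : list block) (U : list (list (list term))) :=
  inst_all (firstn p bs) (firstn p U).
Definition Delta (p : nat) (bs : list block) (U : list (list (list term))) :=
  inst_all (skipn p bs) (skipn p U).

Definition is_solution (p : nat) (bs : list block) (n : nat)
    (U : list (list (list term))) (W : list (list term)) (A : formula) : Prop :=
  alpha_formula n A /\
  E_valid (FImp A (bigand (map (fun w => asubst_f w A) W)) :: Gamma p bs U)
          (Delta p bs U).

Inductive atom : Type :=
| APred : nat -> list term -> atom
| AEq   : term -> term -> atom.

Definition literal := (bool * atom)%type.   (* true = positive *)
Definition clause := list literal.
Definition cnf := list clause.

Definition atom_formula (a : atom) : formula :=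
  match a with APred p l => FPred p l | AEq s t => FEq s t end.
Definition lit_formula (L : literal) : formula :=
  if fst L then atom_formula (snd L) else FNot (atom_formula (snd L)).
Definition clause_formula (C : clause) : formula := bigor (map lit_formula C).
Definition cnf_formula (A : cnf) : formula := bigand (map clause_formula A).

Fixpoint term_eqb (s t : term) {struct s} : bool :=
  match s, t with
  | Var x, Var y => Nat.eqb x y
  | Alpha x, Alpha y => Nat.eqb x y
  | Fn f l, Fn g m =>
      Nat.eqb f g &&
      (fix leq (l m : list term) : bool :=
         match l, m with
         | [], [] => true
         | a :: l', b :: m' => term_eqb a b && leq l' m'
         | _, _ => false
         end) l m
  | _, _ => false
  end.

Fixpoint terms_eqb (l m : list term) : bool :=
  match l, m with
  | [], [] => true
  | a :: l', b :: m' => term_eqb a b && terms_eqb l' m'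
  | _, _ => false
  end.

Definition atom_eqb (a b : atom) : bool :=
  match a, b with
  | APred p l, APred q m => Nat.eqb p q && terms_eqb l m
  | AEq s t, AEq u v => term_eqb s u && term_eqb t v
  | _, _ => false
  end.

Definition lit_eqb (L M : literal) : bool :=
  Bool.eqb (fst L) (fst M) && atom_eqb (snd L) (snd M).

Definition lit_neg (L : literal) : literal := (negb (fst L), snd L).

(* C \ {L}  (clauses are regarded as sets of literals) *)
Definition remove_lit (L : literal) (C : clause) : clause :=
  filter (fun M => negb (lit_eqb L M)) C.

Definition res (C1 C2 : clause) : list clause :=
  flat_map (fun L => if existsb (lit_eqb (lit_neg L)) C2
                     then [remove_lit L C1 ++ remove_lit (lit_neg L) C2]
                     else []) C1.

Inductive rep_t (s t : term) : term -> term -> Prop :=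
| rep_root : rep_t s t s t
| rep_fn : forall f l l', rep_l s t l l' -> rep_t s t (Fn f l) (Fn f l')
with rep_l (s t : term) : list term -> list term -> Prop :=
| rep_hd : forall a a' l, rep_t s t a a' -> rep_l s t (a :: l) (a' :: l)
| rep_tl : forall a l l', rep_l s t l l' -> rep_l s t (a :: l) (a :: l').

Inductive rep_a (s t : term) : atom -> atom -> Prop :=
| rep_pred : forall p l l', rep_l s t l l' -> rep_a s t (APred p l) (APred p l')
| rep_eql : forall u u' v, rep_t s t u u' -> rep_a s t (AEq u v) (AEq u' v)
| rep_eqr : forall u v v', rep_t s t v v' -> rep_a s t (AEq u v) (AEq u v').

Definition para (C1 C2 C : clause) : Prop :=
  exists s t e, In e C1 /\ (e = (true, AEq s t) \/ e = (true, AEq t s)) /\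
  exists b a a', In (b, a) C2 /\ rep_a s t a a' /\
    C = (b, a') :: (remove_lit (b, a) C2 ++ remove_lit e C1).

Definition drop_two (j m : nat) (A : cnf) : cnf :=
  map snd (filter (fun ic => negb (Nat.eqb (fst ic) j) && negb (Nat.eqb (fst ic) m))
                  (combine (seq 0 (length A)) A)).

Definition forget (A B : cnf) : Prop :=
  exists j m C, j <> m /\ j < length A /\ m < length A /\
    (In C (res (nth j A []) (nth m A [])) \/ para (nth j A []) (nth m A []) C) /\
    B = C :: drop_two j m A.

Fixpoint has_alpha_t (n : nat) (t : term) : bool :=
  match t with
  | Var _ => false
  | Alpha j => Nat.ltb j n
  | Fn _ l => existsb (has_alpha_t n) l
  end.

Definition has_alpha_a (n : nat) (a : atom) : bool :=
  match a with
  | APred _ l => existsb (has_alpha_t n) l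
  | AEq s t => has_alpha_t n s || has_alpha_t n t
  end.

Definition has_alpha_c (n : nat) (C : clause) : bool :=
  existsb (fun L => has_alpha_a n (snd L)) C.

Definition prune (n : nat) (A : cnf) : cnf := filter (has_alpha_c n) A.

Definition sf_test (p : nat) (bs : list block) (U : list (list (list term)))
    (W : list (list term)) (B : cnf) : Prop :=
  E_valid (map (fun w => asubst_f w (cnf_formula B)) W ++ Gamma p bs U)
          (Delta p bs U).

(* Big-step semantics of the recursive procedure SF:
   [SF n test A R] means "the call SF(A) terminates and returns R".
   Termination on input A = existence of such a derivation. *)
Inductive SF (n : nat) (test : cnf -> Prop) : cnf -> (cnf -> Prop) -> Prop :=
| SF_call : forall (A : cnf) (Rs : cnf -> cnf -> Prop),
    (forall B, forget (prune n A) B -> test B -> SF n test B (Rs B)) ->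
    SF n test A
       (fun C => C = prune n A \/
                 exists B, forget (prune n A) B /\ test B /\ Rs B C).

(* Termination: every formula in forget(A) has one clause fewer than A
   (two clauses are replaced by one inferred clause), and pruning never adds
   clauses, so SF(A) is defined by well-founded recursion on the number of
   clauses of A.

   Soundness: the two operations performed by SF preserve solutions of the
   schematic extended Herbrand sequent S~.
   - Pruning deletes clauses without any alpha_j.  Such a clause is true or
     false independently of the values of the alpha_j, so it holds of each
     instance A[alpha\w_i] whenever it holds of A, and the implication
     A -> /\_i A[alpha\w_i] survives the deletion.
   - A formula B in forget(A) is a logical consequence of A, because
     resolution and ground paramodulation are sound.  If B holds, the test of
     step (iii) yields Delta; otherwise A fails too, and the solution A yields
     Delta.  Moreover B still mentions only the variables alpha_j. *)

From Stdlib Require Import List Arith Bool Lia Classical ClassicalEpsilon.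
Import ListNotations.

Fixpoint term_ind_nested (P : term -> Prop) (hv : forall x, P (Var x))
  (ha : forall j, P (Alpha j)) (hf : forall f l, Forall P l -> P (Fn f l))
  (t : term) : P t :=
  match t with
  | Var x => hv x
  | Alpha j => ha j
  | Fn f l => hf f l ((fix go (l : list term) : Forall P l :=
       match l with
       | [] => Forall_nil _
       | a :: l' => Forall_cons _ (term_ind_nested P hv ha hf a) (go l')
       end) l)
  end.

Scheme rep_t_mut := Induction for rep_t Sort Prop
with rep_l_mut := Induction for rep_l Sort Prop.
Combined Scheme rep_mutind from rep_t_mut, rep_l_mut.

Lemma term_eqb_sound s : forall t, term_eqb s t = true -> s = t.
Proof.
  induction s as [x|x|f l IHl] using term_ind_nested; intros [y|y|g m]; simpl;
    try discriminate; try (intros E; apply Nat.eqb_eq in E; subst; reflexivity).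
  intros E; apply andb_prop in E as [Efg Elm]; apply Nat.eqb_eq in Efg; subst g.
  f_equal; revert m Elm.
  induction IHl as [|a l Ha _ IH]; intros [|b m]; simpl; try discriminate; auto.
  intros E; apply andb_prop in E as [Eab Elm]; f_equal; auto.
Qed.

Lemma terms_eqb_sound l : forall m, terms_eqb l m = true -> l = m.
Proof.
  induction l as [|a l IH]; intros [|b m]; simpl; try discriminate; auto.
  intros E; apply andb_prop in E as [Eab Elm]; f_equal; auto using term_eqb_sound.
Qed.

Lemma lit_eqb_sound L M : lit_eqb L M = true -> L = M.
Proof.
  destruct L as [b a], M as [c e]; unfold lit_eqb; simpl.
  intros E; apply andb_prop in E as [Ebc Eae]; apply eqb_prop in Ebc; subst c.
  f_equal; destruct a, e; simpl in Eae; try discriminate;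
    apply andb_prop in Eae as [E1 E2].
  - apply Nat.eqb_eq in E1; apply terms_eqb_sound in E2; subst; reflexivity.
  - apply term_eqb_sound in E1; apply term_eqb_sound in E2; subst; reflexivity.
Qed.

Lemma in_remove_lit L C M : In M C -> M <> L -> In M (remove_lit L C).
Proof.
  intros HM HML; apply filter_In; split; auto.
  destruct (lit_eqb L M) eqn:E; auto.
  apply lit_eqb_sound in E; congruence.
Qed.

Lemma remove_lit_incl L C M : In M (remove_lit L C) -> In M C.
Proof. intros HM; apply filter_In in HM; tauto. Qed.

Lemma drop_two_incl j m A C : In C (drop_two j m A) -> In C A.
Proof.
  intros HC; apply in_map_iff in HC as [[i c] [<- HC]].
  apply filter_In in HC as [HC _]; exact (in_combine_r _ _ _ _ HC).
Qed.

(* Removing two distinct indexed clauses shortens the CNF by two: the two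
   indexed pairs are distinct members of the discarded part of the filter. *)
Lemma drop_two_length j m A : j <> m -> j < length A -> m < length A ->
  length (drop_two j m A) + 2 <= length A.
Proof.
  intros Hjm Hj Hm; unfold drop_two; rewrite length_map.
  set (keep := fun ic : nat * clause =>
                 negb (Nat.eqb (fst ic) j) && negb (Nat.eqb (fst ic) m)).
  set (l := combine (seq 0 (length A)) A).
  assert (Hlen : length (seq 0 (length A)) = length A) by apply length_seq.
  assert (Hindexed : forall i, i < length A -> In (i, nth i A []) l).
  { intros i Hi; replace (i, nth i A []) with (nth i l (0, [])).
    - apply nth_In; unfold l; rewrite length_combine; lia.
    - unfold l; rewrite combine_nth, seq_nth; auto. }
  assert (Hdiscarded : length [(j, nth j A []); (m, nth m A [])]
                       <= length (filter (fun ic => negb (keep ic)) l)).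
  { apply NoDup_incl_length.
    - constructor; [intros [E|[]]; congruence|constructor; [auto|constructor]].
    - intros ic [<-|[<-|[]]]; apply filter_In; split; auto; unfold keep; simpl;
        rewrite Nat.eqb_refl; simpl; [|rewrite andb_false_r]; reflexivity. }
  assert (Hl : length l = length A)
    by (unfold l; rewrite length_combine, Hlen; apply Nat.min_id).
  pose proof (filter_length keep l) as Hsplit; simpl in Hdiscarded; lia.
Qed.

Lemma forget_length A B : forget A B -> length B < length A.
Proof.
  intros [j [m [C [Hjm [Hj [Hm [_ ->]]]]]]]; simpl.
  pose proof (drop_two_length j m A Hjm Hj Hm); lia.
Qed.

Lemma prune_length n A : length (prune n A) <= length A.
Proof. apply filter_length_le. Qed.

Lemma forget_preserves (Q : clause -> Prop) :
  (forall C1 C2 C, Q C1 -> Q C2 -> In C (res C1 C2) \/ para C1 C2 C -> Q C) ->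
  forall A B, forget A B -> (forall C, In C A -> Q C) -> forall C, In C B -> Q C.
Proof.
  intros Hclosed A B [j [m [C [_ [Hj [Hm [HC ->]]]]]]] HA C' [<-|HC'].
  - exact (Hclosed _ _ _ (HA _ (nth_In _ [] Hj)) (HA _ (nth_In _ [] Hm)) HC).
  - exact (HA _ (drop_two_incl _ _ _ _ HC')).
Qed.

Section Semantics.
Variables (D : Type) (fi : nat -> list D -> D) (pi : nat -> list D -> Prop)
          (ev : nat -> D).

Lemma sat_bigand ea l :
  sat D fi pi ev ea (bigand l) <-> (forall F, In F l -> sat D fi pi ev ea F).
Proof.
  induction l as [|F [|G l] IH]; simpl in *.
  - split; tauto.
  - split; [intros HF F' [<-|[]]; exact HF|intros Hl; apply Hl; auto].
  - rewrite IH; split; [intros [HF Hl] F' [<-|HF']; auto|].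
    intros Hl; split; auto.
Qed.

Lemma sat_bigor ea l :
  sat D fi pi ev ea (bigor l) <-> (exists F, In F l /\ sat D fi pi ev ea F).
Proof.
  induction l as [|F [|G l] IH]; simpl in *.
  - split; [tauto|intros [F [[] _]]].
  - split; [intros HF; exists F; auto|intros [F' [[<-|[]] HF']]; exact HF'].
  - rewrite IH; split.
    + intros [HF|[F' [HF' Hs]]]; [exists F|exists F']; auto.
    + intros [F' [[<-|HF'] Hs]]; [left|right; exists F']; auto.
Qed.

Lemma eval_asubst ea w t :
  eval D fi ev ea (asubst_t w t)
  = eval D fi ev (fun j => eval D fi ev ea (nth j w (Alpha j))) t.
Proof.
  induction t as [x|j|f l IH] using term_ind_nested; simpl; auto.
  f_equal; rewrite map_map; apply map_ext_in; intros a Ha.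
  rewrite Forall_forall in IH; auto.
Qed.

Lemma sat_asubst ea w F :
  sat D fi pi ev ea (asubst_f w F)
  <-> sat D fi pi ev (fun j => eval D fi ev ea (nth j w (Alpha j))) F.
Proof.
  induction F; simpl; try tauto.
  - rewrite map_map, (map_ext _ _ (eval_asubst ea w)); tauto.
  - rewrite !eval_asubst; tauto.
Qed.

Definition clause_sat ea (C : clause) : Prop :=
  sat D fi pi ev ea (clause_formula C).

Lemma clause_sat_iff ea C :
  clause_sat ea C <-> exists L, In L C /\ sat D fi pi ev ea (lit_formula L).
Proof.
  unfold clause_sat, clause_formula; rewrite sat_bigor; split.
  - intros [F [HF Hs]]; apply in_map_iff in HF as [L [<- HL]]; eauto.
  - intros [L [HL Hs]]; exists (lit_formula L); auto using in_map.
Qed.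

Lemma cnf_sat_iff ea A :
  sat D fi pi ev ea (cnf_formula A) <-> (forall C, In C A -> clause_sat ea C).
Proof.
  unfold cnf_formula; rewrite sat_bigand; split.
  - intros HA C HC; apply HA, in_map, HC.
  - intros HA F HF; apply in_map_iff in HF as [C [<- HC]]; apply HA, HC.
Qed.

Lemma rep_eval ea s t : eval D fi ev ea s = eval D fi ev ea t ->
  (forall u u', rep_t s t u u' -> eval D fi ev ea u = eval D fi ev ea u') /\
  (forall l l', rep_l s t l l' ->
     map (eval D fi ev ea) l = map (eval D fi ev ea) l').
Proof. intros Hst; apply rep_mutind; simpl; intros; congruence. Qed.

Lemma rep_a_sat ea s t a a' : eval D fi ev ea s = eval D fi ev ea t ->
  rep_a s t a a' ->
  (sat D fi pi ev ea (atom_formula a) <-> sat D fi pi ev ea (atom_formula a')).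
Proof.
  intros Hst Hrep; destruct (rep_eval ea s t Hst) as [Hterm Hlist].
  destruct Hrep as [q l l' Hl|u u' v Hu|u v v' Hv]; simpl.
  - rewrite (Hlist _ _ Hl); tauto.
  - rewrite (Hterm _ _ Hu); tauto.
  - rewrite (Hterm _ _ Hv); tauto.
Qed.

Lemma res_sound ea C1 C2 C : clause_sat ea C1 -> clause_sat ea C2 ->
  In C (res C1 C2) -> clause_sat ea C.
Proof.
  intros H1 H2 HC; apply in_flat_map in HC as [L [HL HC]].
  destruct (existsb _ C2); [|destruct HC]; destruct HC as [<-|[]].
  apply clause_sat_iff; apply clause_sat_iff in H1, H2.
  destruct (classic (sat D fi pi ev ea (lit_formula L))) as [HLs|HLs].
  - destruct H2 as [M [HM HMs]]; exists M; split; auto.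
    apply in_or_app; right; apply in_remove_lit; auto; intros ->.
    destruct L as [[|] a]; unfold lit_formula in *; simpl in *; tauto.
  - destruct H1 as [M [HM HMs]]; exists M; split; auto.
    apply in_or_app; left; apply in_remove_lit; auto; congruence.
Qed.

Lemma para_sound ea C1 C2 C : clause_sat ea C1 -> clause_sat ea C2 ->
  para C1 C2 C -> clause_sat ea C.
Proof.
  intros H1 H2 [s [t [e [He [Heq [b [a [a' [Hba [Hrep ->]]]]]]]]]].
  apply clause_sat_iff; apply clause_sat_iff in H1, H2.
  destruct (classic (sat D fi pi ev ea (lit_formula e))) as [Hes|Hes].
  - assert (Hst : eval D fi ev ea s = eval D fi ev ea t)
      by (destruct Heq as [-> | ->]; simpl in Hes; auto).
    destruct H2 as [M [HM HMs]].
    destruct (classic (M = (b, a))) as [->|HMba].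
    + exists (b, a'); split; [left; reflexivity|].
      pose proof (rep_a_sat ea s t a a' Hst Hrep).
      unfold lit_formula in *; destruct b; simpl in *; tauto.
    + exists M; split; auto.
      right; apply in_or_app; left; apply in_remove_lit; auto.
  - destruct H1 as [M [HM HMs]]; exists M; split; auto.
    right; apply in_or_app; right; apply in_remove_lit; auto; congruence.
Qed.

Lemma forget_sound ea A B : forget A B ->
  (forall C, In C A -> clause_sat ea C) -> forall C, In C B -> clause_sat ea C.
Proof.
  apply forget_preserves; intros C1 C2 C H1 H2 [HC|HC];
    [exact (res_sound _ _ _ _ H1 H2 HC)|exact (para_sound _ _ _ _ H1 H2 HC)].
Qed.

End Semantics.

Lemma alpha_fn n f l : alpha_term n (Fn f l) <-> Forall (alpha_term n) l.
Proof.
  simpl; induction l as [|a l IH]; split; intros Hl; auto.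
  - destruct Hl as [Ha Hl]; constructor; auto; apply IH, Hl.
  - inversion Hl; subst; split; auto; apply IH; auto.
Qed.

Lemma alpha_bigand n l : alpha_formula n (bigand l) <-> Forall (alpha_formula n) l.
Proof.
  induction l as [|F [|G l] IH]; simpl in *.
  - split; auto.
  - split; [intros; constructor; auto|intros Hl; inversion Hl; auto].
  - rewrite IH; split; [intros [? ?]; constructor; auto|intros Hl; inversion Hl; auto].
Qed.

Lemma alpha_bigor n l : alpha_formula n (bigor l) <-> Forall (alpha_formula n) l.
Proof.
  induction l as [|F [|G l] IH]; simpl in *.
  - split; auto.
  - split; [intros; constructor; auto|intros Hl; inversion Hl; auto].
  - rewrite IH; split; [intros [? ?]; constructor; auto|intros Hl; inversion Hl; auto].
Qed.

Definition clause_alpha (n : nat) (C : clause) : Prop :=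
  forall L, In L C -> alpha_formula n (lit_formula L).

Lemma alpha_cnf n A :
  alpha_formula n (cnf_formula A) <-> (forall C, In C A -> clause_alpha n C).
Proof.
  unfold cnf_formula, clause_alpha; rewrite alpha_bigand, Forall_forall; split.
  - intros HA C HC L HL.
    assert (HCf := HA _ (in_map clause_formula _ _ HC)).
    unfold clause_formula in HCf; rewrite alpha_bigor, Forall_forall in HCf.
    apply HCf, in_map, HL.
  - intros HA F HF; apply in_map_iff in HF as [C [<- HC]].
    unfold clause_formula; rewrite alpha_bigor, Forall_forall.
    intros G HG; apply in_map_iff in HG as [L [<- HL]]; exact (HA C HC L HL).
Qed.

Lemma rep_alpha n s t : alpha_term n t ->
  (forall u u', rep_t s t u u' -> alpha_term n u -> alpha_term n u') /\
  (forall l l', rep_l s t l l' ->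
     Forall (alpha_term n) l -> Forall (alpha_term n) l').
Proof.
  intros Ht; apply rep_mutind; intros; auto.
  - rewrite alpha_fn in *; auto.
  - inversion H0; subst; constructor; auto.
  - inversion H0; subst; constructor; auto.
Qed.

Lemma clause_alpha_remove_app n L1 L2 C1 C2 :
  clause_alpha n C1 -> clause_alpha n C2 ->
  clause_alpha n (remove_lit L1 C1 ++ remove_lit L2 C2).
Proof.
  intros H1 H2 M HM; apply in_app_or in HM as [HM|HM];
    [apply H1|apply H2]; eapply remove_lit_incl; eauto.
Qed.

Lemma inference_alpha n C1 C2 C : clause_alpha n C1 -> clause_alpha n C2 ->
  In C (res C1 C2) \/ para C1 C2 C -> clause_alpha n C.
Proof.
  intros H1 H2 [HC|[s [t [e [He [Heq [b [a [a' [Hba [Hrep ->]]]]]]]]]]].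
  - apply in_flat_map in HC as [L [HL HC]].
    destruct (existsb _ C2); [|destruct HC]; destruct HC as [<-|[]].
    apply clause_alpha_remove_app; auto.
  - intros M [<-|HM]; [|revert M HM; apply clause_alpha_remove_app; auto].
    assert (Ht : alpha_term n t)
      by (specialize (H1 _ He); destruct Heq as [-> | ->]; simpl in H1; tauto).
    destruct (rep_alpha n s t Ht) as [Hterm Hlist].
    specialize (H2 _ Hba); unfold lit_formula in *; simpl in *.
    assert (alpha_formula n (atom_formula a')).
    { destruct b; simpl in H2; destruct Hrep; simpl in *; intuition eauto. }
    destruct b; simpl; auto.
Qed.

Lemma existsb_false_in {X} (f : X -> bool) l x :
  existsb f l = false -> In x l -> f x = false.
Proof.
  intros Hl Hx; destruct (f x) eqn:E; auto.
  rewrite <- Hl; symmetry; apply existsb_exists; eauto.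
Qed.

Lemma eval_alpha_free D fi ev n t : alpha_term n t -> has_alpha_t n t = false ->
  forall ea1 ea2, eval D fi ev ea1 t = eval D fi ev ea2 t.
Proof.
  induction t as [x|j|f l IH] using term_ind_nested; simpl;
    intros Ha Hfree ea1 ea2; auto.
  - apply Nat.ltb_ge in Hfree; lia.
  - f_equal; apply map_ext_in; intros a Hal.
    change (alpha_term n (Fn f l)) in Ha.
    rewrite Forall_forall in IH; rewrite alpha_fn, Forall_forall in Ha.
    apply IH; auto; eapply existsb_false_in; eauto.
Qed.

Lemma clause_sat_alpha_free D fi pi ev n C :
  clause_alpha n C -> has_alpha_c n C = false ->
  forall ea1 ea2, clause_sat D fi pi ev ea1 C -> clause_sat D fi pi ev ea2 C.
Proof.
  intros HC Hfree ea1 ea2 Hs; apply clause_sat_iff in Hs as [[b a] [HL Hs]].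
  apply clause_sat_iff; exists (b, a); split; auto.
  pose proof (existsb_false_in _ _ _ Hfree HL) as Hafree; simpl in Hafree.
  specialize (HC _ HL); unfold lit_formula in *; simpl in *.
  assert (Hatom : sat D fi pi ev ea1 (atom_formula a)
                  <-> sat D fi pi ev ea2 (atom_formula a)).
  { destruct a as [q l|u v]; simpl in *.
    - assert (Hl : Forall (alpha_term n) l) by (destruct b; auto).
      rewrite Forall_forall in Hl; erewrite map_ext_in; [reflexivity|].
      intros u Hu; apply eval_alpha_free with n; auto.
      eapply existsb_false_in; eauto.
    - apply orb_false_iff in Hafree as [Hu Hv].
      assert (Huv : alpha_term n u /\ alpha_term n v) by (destruct b; auto).
      destruct Huv as [Hua Hva].
      rewrite (eval_alpha_free D fi ev n u Hua Hu ea1 ea2),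
              (eval_alpha_free D fi ev n v Hva Hv ea1 ea2); tauto. }
  destruct b; simpl in *; tauto.
Qed.

Lemma prune_solution p bs n U W A :
  is_solution p bs n U W (cnf_formula A) ->
  is_solution p bs n U W (cnf_formula (prune n A)).
Proof.
  intros [Halpha Hvalid]; rewrite alpha_cnf in Halpha; split.
  { rewrite alpha_cnf; intros C HC; apply filter_In in HC; apply Halpha; tauto. }
  intros D fi pi ev ea HG; apply Hvalid.
  intros F [<-|HF]; [|apply HG; right; exact HF].
  cbn [sat]; intros HA; rewrite cnf_sat_iff in HA.
  assert (Hpruned : sat D fi pi ev ea (cnf_formula (prune n A))).
  { apply cnf_sat_iff; intros C HC; apply filter_In in HC; apply HA; tauto. }
  assert (Hinst : sat D fi pi ev ea
            (bigand (map (fun w => asubst_f w (cnf_formula (prune n A))) W)))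
    by exact (HG _ (or_introl eq_refl) Hpruned).
  rewrite sat_bigand in *; intros F HF.
  apply in_map_iff in HF as [w [<- Hw]].
  specialize (Hinst _ (in_map _ _ _ Hw)).
  rewrite sat_asubst, cnf_sat_iff in *; intros C HC.
  destruct (has_alpha_c n C) eqn:Hfree.
  - apply Hinst, filter_In; auto.
  - eapply clause_sat_alpha_free; eauto.
Qed.

Lemma forget_solution p bs n U W A B :
  is_solution p bs n U W (cnf_formula A) -> forget A B ->
  sf_test p bs U W B -> is_solution p bs n U W (cnf_formula B).
Proof.
  intros [Halpha Hvalid] Hforget Htest; split.
  { rewrite alpha_cnf in *; exact (forget_preserves _ (inference_alpha n) _ _ Hforget Halpha). }
  intros D fi pi ev ea HG.
  destruct (classic (sat D fi pi ev ea (cnf_formula B))) as [HB|HB].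
  - apply Htest; intros F HF; apply in_app_or in HF as [HF|HF].
    + assert (Hinst : sat D fi pi ev ea
                (bigand (map (fun w => asubst_f w (cnf_formula B)) W)))
        by exact (HG _ (or_introl eq_refl) HB).
      rewrite sat_bigand in Hinst; auto.
    + apply HG; right; exact HF.
  - apply Hvalid; intros F [<-|HF]; [|apply HG; right; exact HF].
    cbn [sat]; intros HA; exfalso; apply HB.
    rewrite cnf_sat_iff in *; eapply forget_sound; eauto.
Qed.

Lemma SF_sound p bs n U W A R : SF n (sf_test p bs U W) A R ->
  is_solution p bs n U W (cnf_formula A) ->
  forall C, R C -> is_solution p bs n U W (cnf_formula C).
Proof.
  induction 1 as [A Rs _ IH]; intros Hsol C [->|[B [Hforget [Htest HR]]]].
  - exact (prune_solution _ _ _ _ _ _ Hsol).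
  - exact (IH B Hforget Htest (forget_solution _ _ _ _ _ _ _
             (prune_solution _ _ _ _ _ _ Hsol) Hforget Htest) C HR).
Qed.

(* SF terminates on every input and for every test: induction on the number
   of clauses, the results of the recursive calls being chosen by choice. *)
Lemma SF_terminates n (test : cnf -> Prop) A : exists R, SF n test A R.
Proof.
  induction A as [A IH] using (induction_ltof1 _ (@length clause)).
  assert (Hcalls : forall B, exists R, forget (prune n A) B -> test B -> SF n test B R).
  { intros B; destruct (classic (forget (prune n A) B)) as [Hforget|Hforget].
    - assert (Hshorter : length B < length A)
        by (pose proof (forget_length _ _ Hforget); pose proof (prune_length n A); lia).
      destruct (IH B Hshorter) as [R HR]; exists R; auto.
    - exists (fun _ => False); tauto. }
  pose (Rs := fun B => proj1_sig (constructive_indefinite_description _ (Hcalls B))).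
  exists (fun C => C = prune n A \/ exists B, forget (prune n A) B /\ test B /\ Rs B C).
  apply SF_call; intros B Hforget Htest.
  exact (proj2_sig (constructive_indefinite_description _ (Hcalls B)) Hforget Htest).
Qed.

Theorem mainTheorem3
  (p : nat) (bs : list block) (H : list (list (list term)))
  (n : nat) (U : list (list (list term))) (W : list (list term)) (A : cnf) :
  sigma1_sequent p bs ->
  herbrand_structure p bs H ->
  decomposition bs H n U W ->
  is_solution p bs n U W (cnf_formula A) ->
  (exists R, SF n (sf_test p bs U W) A R) /\
  (forall R, SF n (sf_test p bs U W) A R ->
     forall B, R B -> is_solution p bs n U W (cnf_formula B)).
Proof.
  intros _ _ _ Hsol; split.
  - apply SF_terminates.
  - intros R HR; exact (SF_sound p bs n U W A R HR Hsol).
Qed.
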